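(* Assume the setting below, let $\lambda>0$ with $\mu_+(\max\{\lambda,1\})\le1$, assume (A1), (A2), (A4), (A5), (A6), (A7), and (A8) with $\beta=0$. If $r$ is a cavitating equilibrium solution with $r(1)=\lambda$, then $$\lim_{\rho\to0^+}r'(\rho)\tau(\rho)^{n-1}=\varpi,$$ where $\varpi>0$ is the (unique) point with $h'(\varpi)=0$.
   Context: Setting: $n\ge2$; $\kappa$ continuous on $[0,\infty)$, $\mu_+(\lambda)=\int_0^\lambda s\max\{\kappa(s),0\}ds$; $f$ solves $f''+\kappa f=0$, $f(0)=0$, $f'(0)=1$. $\Phi(v_1,\dots,v_n)=\sum_i\phi(v_i)+h(v_1\cdots v_n)$, $\tau(\rho)=f(r(\rho))/f(\rho)$, $T(\rho)=\tau^{n-1}\big[\phi'(r')+h'(r'\tau^{n-1})\tau^{n-1}\big]$ (radial Cauchy stress). An equilibrium solution with $r(1)=\lambda$ is $r\in C^1(0,1]$, twice differentiable on $(0,1)$, $r'>0$ on $(0,1]$, $r(0):=\lim_{\rho\to0^+}r(\rho)\ge0$, $r(1)=\lambda$, satisfying on $(0,1)$ $$f(\rho)\big[\phi''(r')+h''(r'\tau^{n-1})\tau^{2(n-1)}\big]r''=(n-1)\big[f'(r)\phi'(\tau)-f'(\rho)\phi'(r')\big]-(n-1)\big(f'(r)r'-f'(\rho)\tau\big)h''(r'\tau^{n-1})\,r'\tau^{2n-3};$$ it is cavitating if $r(0)>0$ and $\lim_{\rho\to0^+}T(\rho)=0$. (A1) $h$ is $C^2$, strictly convex. (A2) $\lim_{v\to0^+}h(v)=\lim_{v\to\infty}h(v)/v=+\infty$.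 (A4) $\phi:(0,\infty)\to(0,\infty)$ $C^2$, convex. (A5) $v\phi'(v)$ increasing. (A6) there is $t_0\ge0$ with $\phi'(t_0)=0$; $q_1(s)=\sup_{v>t_0}\phi'(v)/\phi'(sv)$ ($s\ge1$), $q_0(s)=\inf_{v>t_0/s}\phi'(v)/\phi'(sv)$ ($s\in(0,1]$) satisfy $q_1\in C^1[1,\infty)$, $q_0\in C^1(0,1]$, $q_1(s)\to0$ ($s\to\infty$), $q_0(s)\to\infty$ ($s\to0^+$), $q_1'<0$, $q_0'<0$. (A7) there are $\delta_0,\delta_1>0$ with $|\phi'(sv)|\le\delta_1\phi(v)/v$ for all $v>0$ whenever $|s-1|<\delta_0$. (A8) $\phi(v)\le\delta_2(1+v^\alpha+v^{-\beta})$ for all $v>0$, $\delta_2>0$, $0<\alpha<n$, $0\le\beta<1+1/(n-1)$. *)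

From Stdlib Require Import Reals Lra Lia.
Open Scope R_scope.

Definition right_lim (g : R -> R) (a l : R) : Prop :=
  forall eps, 0 < eps -> exists delta, 0 < delta /\
    forall x, a < x < a + delta -> Rabs (g x - l) < eps.

Definition left_lim (g : R -> R) (a l : R) : Prop :=
  forall eps, 0 < eps -> exists delta, 0 < delta /\
    forall x, a - delta < x < a -> Rabs (g x - l) < eps.

Definition right_lim_infty (g : R -> R) (a : R) : Prop :=
  forall M, exists delta, 0 < delta /\ forall x, a < x < a + delta -> M < g x.

Definition lim_infty_infty (g : R -> R) : Prop :=
  forall M, exists X, forall x, X < x -> M < g x.

Definition lim_infty (g : R -> R) (l : R) : Prop :=
  forall eps, 0 < eps -> exists X, forall x, X < x -> Rabs (g x - l) < eps.

Definition right_deriv (g : R -> R) (a l : R) : Prop :=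
  right_lim (fun x => (g x - g a) / (x - a)) a l.
Definition left_deriv (g : R -> R) (a l : R) : Prop :=
  left_lim (fun x => (g x - g a) / (x - a)) a l.

Definition convex_pos (g : R -> R) : Prop :=
  forall x y t, 0 < x -> 0 < y -> 0 <= t <= 1 ->
    g (t * x + (1 - t) * y) <= t * g x + (1 - t) * g y.
Definition strictly_convex_pos (g : R -> R) : Prop :=
  forall x y t, 0 < x -> 0 < y -> x <> y -> 0 < t < 1 ->
    g (t * x + (1 - t) * y) < t * g x + (1 - t) * g y.

Definition is_lower_bound (E : R -> Prop) (m : R) : Prop := forall x, E x -> m <= x.
Definition is_glb (E : R -> Prop) (m : R) : Prop :=
  is_lower_bound E m /\ forall b, is_lower_bound E b -> b <= m.

(* Write A = tau^(n-1) and w = r' A.  The radial Cauchy stress is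
   T = A (phi'(r') + h'(w) A), and cavitation means T -> 0.  The proof
   rests on three facts:
   - tau -> +oo at the cavity, because f(r(rho)) -> f(r(0)) > 0 while
     f(rho) -> 0.  Positivity of f on (0, max(lambda,1]) is a Sturm-type
     comparison: with P(x) = int_0^x s kappa_+(s) ds <= mu_+ <= 1, the
     function f' - (1 - P) f / x cannot become negative while f > 0;
   - phi' >= 0 and phi' is nondecreasing, h' is strictly increasing and
     has a zero varpi (from (A1), (A2), (A4), (A5) and (A8) with beta = 0);
   - the identity h'(w) = (T - A phi'(r')) / A^2 then squeezes w:
     h'(w) <= |T| forces w < varpi + e, hence r' <= 1 and phi'(r') <= phi'(1),
     and then h'(w) >= -|T| - phi'(1) / A forces w > varpi - e.
   The file first sets up one-sided limits near 0, monotonicity from the sign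
   of a derivative and convexity; then the facts above; the proposition is
   assembled at the end. *)

From Stdlib Require Import Reals Lra Lia.
From Coquelicot Require Coquelicot.
Open Scope R_scope.

Definition near0 (P : R -> Prop) : Prop :=
  exists d, 0 < d /\ forall p, 0 < p < d -> P p.

Lemma near0_and (P Q : R -> Prop) :
  near0 P -> near0 Q -> near0 (fun p => P p /\ Q p).
Proof.
  intros [d1 [Hd1 H1]] [d2 [Hd2 H2]]. exists (Rmin d1 d2). split.
  - now apply Rmin_pos.
  - intros p Hp. pose proof (Rmin_l d1 d2). pose proof (Rmin_r d1 d2).
    split; [apply H1 | apply H2]; lra.
Qed.

Lemma near0_impl (P Q : R -> Prop) :
  (forall p, 0 < p -> P p -> Q p) -> near0 P -> near0 Q.
Proof.
  intros HPQ [d [Hd HP]]. exists d. split; [exact Hd|].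
  intros p Hp. apply HPQ; [lra | now apply HP].
Qed.

Lemma near0_lt (d : R) : 0 < d -> near0 (fun p => p < d).
Proof. intros Hd. exists d. split; [exact Hd | intros p Hp; lra]. Qed.

Lemma near0_point (P : R -> Prop) : near0 P -> exists p, 0 < p /\ P p.
Proof. intros [d [Hd HP]]. exists (d / 2). split; [lra | apply HP; lra]. Qed.

Lemma right_lim_near0 (g : R -> R) (l eps : R) :
  right_lim g 0 l -> 0 < eps -> near0 (fun p => Rabs (g p - l) < eps).
Proof.
  intros Hg Heps. destruct (Hg eps Heps) as [d [Hd H]]. exists d. split; [exact Hd|].
  intros p Hp. apply H. lra.
Qed.

Lemma near0_right_lim (g : R -> R) (l : R) :
  (forall eps, 0 < eps -> near0 (fun p => Rabs (g p - l) < eps)) -> right_lim g 0 l.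
Proof.
  intros H eps Heps. destruct (H eps Heps) as [d [Hd Hp]]. exists d. split; [exact Hd|].
  intros p Hp'. apply Hp. lra.
Qed.

Lemma right_lim_infty_near0 (g : R -> R) (M : R) :
  right_lim_infty g 0 -> near0 (fun p => M < g p).
Proof.
  intros Hg. destruct (Hg M) as [d [Hd H]]. exists d. split; [exact Hd|].
  intros p Hp. apply H. lra.
Qed.

Lemma near0_right_lim_infty (g : R -> R) :
  (forall M, near0 (fun p => M < g p)) -> right_lim_infty g 0.
Proof.
  intros H M. destruct (H M) as [d [Hd Hp]]. exists d. split; [exact Hd|].
  intros p Hp'. apply Hp. lra.
Qed.

Lemma continuity_pt_eps (g : R -> R) (x : R) :
  continuity_pt g x <->
  (forall eps, 0 < eps -> exists d, 0 < d /\
     forall y, Rabs (y - x) < d -> Rabs (g y - g x) < eps).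
Proof.
  unfold continuity_pt, continue_in, limit1_in, limit_in; simpl.
  unfold R_dist, D_x, no_cond. split.
  - intros H eps Heps. destruct (H eps Heps) as [d [Hd Hy]]. exists d. split; [exact Hd|].
    intros y Hyx. destruct (Req_dec x y) as [<-|Hne].
    + rewrite Rminus_diag, Rabs_R0. exact Heps.
    + apply Hy. auto.
  - intros H eps Heps. destruct (H eps Heps) as [d [Hd Hy]]. exists d. split; [exact Hd|].
    intros y [_ Hyx]. now apply Hy.
Qed.

Lemma derivable_continuity_pt (g : R -> R) (x l : R) :
  derivable_pt_lim g x l -> continuity_pt g x.
Proof. intros H. apply derivable_continuous_pt. now exists l. Qed.

Lemma continuity_pt_pos_part (g : R -> R) (x : R) :
  continuity_pt g x -> continuity_pt (fun s => Rmax (g s) 0) x.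
Proof.
  intros Hg. apply continuity_pt_eps. intros eps Heps.
  destruct (proj1 (continuity_pt_eps g x) Hg eps Heps) as [d [Hd Hy]].
  exists d. split; [exact Hd|]. intros y Hyx. eapply Rle_lt_trans; [|exact (Hy y Hyx)].
  unfold Rmax. repeat destruct Rle_dec; unfold Rabs; repeat destruct Rcase_abs; lra.
Qed.

Lemma continuity_pt_clamp0 (g : R -> R) :
  (forall x, 0 < x -> continuity_pt g x) -> right_lim g 0 (g 0) ->
  forall x, continuity_pt (fun s => g (Rmax s 0)) x.
Proof.
  intros Hg Hg0 x. apply continuity_pt_eps. intros eps Heps.
  destruct (Rlt_or_le 0 x) as [Hx|Hx].
  - destruct (proj1 (continuity_pt_eps g x) (Hg x Hx) eps Heps) as [d [Hd Hy]].
    exists (Rmin d x). split; [now apply Rmin_pos|]. intros y Hyx.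
    pose proof (Rmin_l d x). pose proof (Rmin_r d x). apply Rabs_def2 in Hyx.
    rewrite (Rmax_left y), (Rmax_left x) by lra. apply Hy, Rabs_def1; lra.
  - destruct (Hg0 eps Heps) as [d [Hd Hy]].
    exists (if Rlt_dec x 0 then - x else d). split; [destruct Rlt_dec; lra|].
    intros y Hyx. rewrite (Rmax_right x) by lra.
    unfold Rmax at 1. destruct Rle_dec as [Hy0|Hy0].
    + rewrite Rminus_diag, Rabs_R0. exact Heps.
    + destruct Rlt_dec; apply Rabs_def2 in Hyx; [lra|]. apply Hy. lra.
Qed.

Lemma right_lim_comp_continuous (g r : R -> R) (a r0 : R) :
  continuity_pt g r0 -> right_lim r a r0 -> right_lim (fun p => g (r p)) a (g r0).
Proof.
  intros Hg Hr eps Heps.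
  destruct (proj1 (continuity_pt_eps g r0) Hg eps Heps) as [d1 [Hd1 H1]].
  destruct (Hr d1 Hd1) as [d2 [Hd2 H2]]. exists d2. split; [exact Hd2|].
  intros p Hp. apply H1, H2, Hp.
Qed.

Lemma right_lim_infty_div (g k : R -> R) (L : R) :
  0 < L -> right_lim g 0 L -> right_lim k 0 0 -> near0 (fun p => 0 < k p) ->
  right_lim_infty (fun p => g p / k p) 0.
Proof.
  intros HL Hg Hk Hkpos. apply near0_right_lim_infty. intros M.
  set (M' := Rmax M 1). assert (HM' : M <= M' /\ 1 <= M') by (split; [apply Rmax_l | apply Rmax_r]).
  assert (Hbound : 0 < L / (2 * M')) by (apply Rdiv_lt_0_compat; lra).
  eapply near0_impl; [|apply near0_and; [apply near0_and|]];
    [| exact (right_lim_near0 g L (L / 2) Hg ltac:(lra))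
     | exact (right_lim_near0 k 0 _ Hk Hbound) | exact Hkpos].
  intros p _ [[Hgp Hkp] Hpos]. rewrite Rminus_0_r in Hkp.
  apply Rabs_def2 in Hgp. apply Rabs_def2 in Hkp.
  assert (Hsmall : M' * k p < L / 2).
  { replace (L / 2) with (M' * (L / (2 * M'))) by (field; lra).
    apply Rmult_lt_compat_l; lra. }
  apply (Rmult_lt_reg_r (k p)); [exact Hpos|].
  replace (g p / k p * k p) with (g p) by (field; lra). nra.
Qed.

Lemma pow_ge_self (t : R) (k : nat) : 1 <= t -> (1 <= k)%nat -> t <= t ^ k.
Proof.
  intros Ht Hk. destruct k as [|m]; [lia|]. simpl. pose proof (pow_R1_Rle t m Ht). nra.
Qed.

Lemma right_lim_infty_pow (g : R -> R) (k : nat) :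
  (1 <= k)%nat -> right_lim_infty g 0 -> right_lim_infty (fun p => g p ^ k) 0.
Proof.
  intros Hk Hg. apply near0_right_lim_infty. intros M.
  apply (near0_impl (fun p => Rmax M 1 < g p)); [|apply right_lim_infty_near0, Hg].
  intros p _ Hp. pose proof (Rmax_l M 1). pose proof (Rmax_r M 1).
  pose proof (pow_ge_self (g p) k ltac:(lra) Hk). lra.
Qed.

Lemma nondecreasing_of_deriv (g g1 : R -> R) (a b : R) :
  a < b -> (forall c, a <= c <= b -> derivable_pt_lim g c (g1 c)) ->
  (forall c, a < c < b -> 0 <= g1 c) -> g a <= g b.
Proof.
  intros Hab Hd Hsign. destruct (MVT_cor2 g g1 a b Hab Hd) as [c [Hc Hcab]].
  specialize (Hsign c Hcab). nra.
Qed.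

Lemma nonincreasing_of_deriv (g g1 : R -> R) (a b : R) :
  a < b -> (forall c, a <= c <= b -> derivable_pt_lim g c (g1 c)) ->
  (forall c, a < c < b -> g1 c <= 0) -> g b <= g a.
Proof.
  intros Hab Hd Hsign. destruct (MVT_cor2 g g1 a b Hab Hd) as [c [Hc Hcab]].
  specialize (Hsign c Hcab). nra.
Qed.

Lemma increasing_of_deriv (g g1 : R -> R) (a b : R) :
  a < b -> (forall c, a <= c <= b -> derivable_pt_lim g c (g1 c)) ->
  (forall c, a < c < b -> 0 < g1 c) -> g a < g b.
Proof.
  intros Hab Hd Hsign. destruct (MVT_cor2 g g1 a b Hab Hd) as [c [Hc Hcab]].
  specialize (Hsign c Hcab). nra.
Qed.

Lemma increasing_reflect_lt (g : R -> R) (x y : R) :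
  (forall a b, 0 < a -> a < b -> g a < g b) -> 0 < x -> 0 < y -> g x < g y -> x < y.
Proof.
  intros Hg Hx Hy Hxy. destruct (Rtotal_order x y) as [H|[H|H]]; [exact H| |].
  - subst. lra.
  - pose proof (Hg y x Hy H). lra.
Qed.

Lemma right_lim_le_of_nondecreasing (g : R -> R) (a b l : R) :
  (forall x y, a < x -> x < y -> y < b -> g x <= g y) -> right_lim g a l ->
  forall x, a < x < b -> l <= g x.
Proof.
  intros Hmono Hlim x Hx. destruct (Rle_or_lt l (g x)) as [H|H]; [exact H|exfalso].
  destruct (Hlim (l - g x)) as [d [Hd Hy]]; [lra|].
  set (t := a + Rmin d (x - a) / 2).
  assert (Ht : a < t < a + d /\ t < x).
  { unfold t. pose proof (Rmin_l d (x - a)). pose proof (Rmin_r d (x - a)).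
    assert (0 < Rmin d (x - a)) by (apply Rmin_pos; lra). lra. }
  specialize (Hy t ltac:(lra)). apply Rabs_def2 in Hy.
  pose proof (Hmono t x ltac:(lra) ltac:(lra) ltac:(lra)). lra.
Qed.

Lemma le_left_lim_of_nondecreasing (g : R -> R) (a b l : R) :
  (forall x y, a < x -> x < y -> y < b -> g x <= g y) -> left_lim g b l ->
  forall x, a < x < b -> g x <= l.
Proof.
  intros Hmono Hlim x Hx. destruct (Rle_or_lt (g x) l) as [H|H]; [exact H|exfalso].
  destruct (Hlim (g x - l)) as [d [Hd Hy]]; [lra|].
  set (t := b - Rmin d (b - x) / 2).
  assert (Ht : b - d < t < b /\ x < t).
  { unfold t. pose proof (Rmin_l d (b - x)). pose proof (Rmin_r d (b - x)).
    assert (0 < Rmin d (b - x)) by (apply Rmin_pos; lra). lra. }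
  specialize (Hy t ltac:(lra)). apply Rabs_def2 in Hy.
  pose proof (Hmono x t ltac:(lra) ltac:(lra) ltac:(lra)). lra.
Qed.

Lemma left_lim_of_left_deriv (g : R -> R) (b l : R) :
  left_deriv g b l -> left_lim g b (g b).
Proof.
  intros Hd eps Heps. destruct (Hd 1 Rlt_0_1) as [d [Hd0 Hq]].
  set (B := Rabs l + 1). assert (HB : 0 < B) by (unfold B; pose proof (Rabs_pos l); lra).
  exists (Rmin d (eps / B)). split; [apply Rmin_pos; [lra | now apply Rdiv_lt_0_compat]|].
  intros x Hx. pose proof (Rmin_l d (eps / B)). pose proof (Rmin_r d (eps / B)).
  specialize (Hq x ltac:(lra)). set (q := (g x - g b) / (x - b)) in Hq.
  assert (Hgq : g x - g b = q * (x - b)) by (unfold q; field; lra).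
  assert (Hq' : Rabs q <= B).
  { apply Rabs_def2 in Hq. pose proof (Rle_abs l). pose proof (Rle_abs (- l)).
    rewrite Rabs_Ropp in *. unfold B. apply Rabs_le. lra. }
  rewrite Hgq, Rabs_mult, (Rabs_left (x - b)) by lra.
  replace eps with (B * (eps / B)) by (field; lra).
  pose proof (Rabs_pos q). nra.
Qed.

Section Convexity.
Variables (g g1 : R -> R).
Hypothesis Hd : forall v, 0 < v -> derivable_pt_lim g v (g1 v).

Lemma convex_slope_left (Hc : convex_pos g) (x y : R) :
  0 < x -> x < y -> g1 x <= (g y - g x) / (y - x).
Proof.
  intros Hx Hxy. set (S := (g y - g x) / (y - x)).
  destruct (Rle_or_lt (g1 x) S) as [H|H]; [exact H|exfalso].
  destruct (Hd x Hx (g1 x - S) ltac:(lra)) as [[d Hdp] Hdl].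
  set (t := Rmin (1 / 2) (d / (2 * (y - x)))).
  assert (Ht : 0 < t <= 1 / 2).
  { unfold t. split; [apply Rmin_pos; [lra | apply Rdiv_lt_0_compat; lra] | apply Rmin_l]. }
  assert (Hhh : 0 < t * (y - x) < d).
  { split; [nra|]. pose proof (Rmin_r (1 / 2) (d / (2 * (y - x)))) as Ht2.
    apply (Rmult_le_compat_r (y - x)) in Ht2; [|lra].
    replace (d / (2 * (y - x)) * (y - x)) with (d / 2) in Ht2 by (field; lra). unfold t. lra. }
  specialize (Hdl (t * (y - x)) ltac:(lra) ltac:(rewrite Rabs_right; simpl; lra)).
  specialize (Hc y x t ltac:(lra) Hx ltac:(lra)).
  replace (t * y + (1 - t) * x) with (x + t * (y - x)) in Hc by ring.
  assert (HS : g y - g x = S * (y - x)) by (unfold S; field; lra).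
  assert ((g (x + t * (y - x)) - g x) / (t * (y - x)) <= S).
  { apply (Rmult_le_reg_r (t * (y - x))); [lra|]. field_simplify; [nra | lra]. }
  apply Rabs_def2 in Hdl. lra.
Qed.

Lemma convex_slope_right (Hc : convex_pos g) (x y : R) :
  0 < x -> x < y -> (g y - g x) / (y - x) <= g1 y.
Proof.
  intros Hx Hxy. set (S := (g y - g x) / (y - x)).
  destruct (Rle_or_lt S (g1 y)) as [H|H]; [exact H|exfalso].
  destruct (Hd y ltac:(lra) (S - g1 y) ltac:(lra)) as [[d Hdp] Hdl].
  set (t := Rmin (1 / 2) (d / (2 * (y - x)))).
  assert (Ht : 0 < t <= 1 / 2).
  { unfold t. split; [apply Rmin_pos; [lra | apply Rdiv_lt_0_compat; lra] | apply Rmin_l]. }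
  assert (Hhh : 0 < t * (y - x) < d).
  { split; [nra|]. pose proof (Rmin_r (1 / 2) (d / (2 * (y - x)))) as Ht2.
    apply (Rmult_le_compat_r (y - x)) in Ht2; [|lra].
    replace (d / (2 * (y - x)) * (y - x)) with (d / 2) in Ht2 by (field; lra). unfold t. lra. }
  specialize (Hdl (- (t * (y - x))) ltac:(lra) ltac:(rewrite Rabs_left; simpl; lra)).
  specialize (Hc x y t Hx ltac:(lra) ltac:(lra)).
  replace (t * x + (1 - t) * y) with (y + - (t * (y - x))) in Hc by ring.
  assert (HS : g y - g x = S * (y - x)) by (unfold S; field; lra).
  assert (S <= (g (y + - (t * (y - x))) - g y) / - (t * (y - x))).
  { apply (Rmult_le_reg_r (t * (y - x))); [lra|].
    replace ((g (y + - (t * (y - x))) - g y) / - (t * (y - x)) * (t * (y - x)))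
      with (g y - g (y + - (t * (y - x)))) by (field; lra). nra. }
  apply Rabs_def2 in Hdl. lra.
Qed.

Lemma convex_deriv_nondecreasing (Hc : convex_pos g) (x y : R) :
  0 < x -> x <= y -> g1 x <= g1 y.
Proof.
  intros Hx Hxy. destruct (Rle_lt_or_eq_dec _ _ Hxy) as [H|<-]; [|lra].
  pose proof (convex_slope_left Hc x y Hx H). pose proof (convex_slope_right Hc x y Hx H). lra.
Qed.

Lemma strictly_convex_convex : strictly_convex_pos g -> convex_pos g.
Proof.
  intros Hsc a b t Ha Hb Ht. destruct (Req_dec a b) as [<-|Hne].
  { replace (t * a + (1 - t) * a) with a by ring. lra. }
  destruct (Req_dec t 0) as [->|H0].
  { replace (0 * a + (1 - 0) * b) with b by ring. lra. }
  destruct (Req_dec t 1) as [->|H1].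
  { replace (1 * a + (1 - 1) * b) with a by ring. lra. }
  left. apply Hsc; auto. lra.
Qed.

(* Strict convexity makes the derivative strictly increasing: compare the
   two half-chords through the midpoint. *)
Lemma strictly_convex_deriv_increasing (Hsc : strictly_convex_pos g) (x y : R) :
  0 < x -> x < y -> g1 x < g1 y.
Proof.
  intros Hx Hxy. pose proof (strictly_convex_convex Hsc) as Hc. set (m := (x + y) / 2).
  pose proof (convex_slope_left Hc x m Hx ltac:(unfold m; lra)).
  pose proof (convex_slope_right Hc m y ltac:(unfold m; lra) ltac:(unfold m; lra)).
  specialize (Hsc x y (1 / 2) Hx ltac:(lra) ltac:(lra) ltac:(lra)).
  replace (1 / 2 * x + (1 - 1 / 2) * y) with m in Hsc by (unfold m; field).
  replace (m - x) with (y - m) in * by (unfold m; field).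
  assert ((g m - g x) / (y - m) < (g y - g m) / (y - m)).
  { unfold Rdiv. apply Rmult_lt_compat_r; [apply Rinv_0_lt_compat; unfold m|]; lra. }
  lra.
Qed.

End Convexity.

Lemma phi_bounded_near0 (phi : R -> R) (delta2 alpha : R) :
  0 < delta2 -> 0 < alpha ->
  (forall v, 0 < v -> phi v <= delta2 * (1 + Rpower v alpha + Rpower v (- 0))) ->
  forall v, 0 < v <= 1 -> phi v <= 3 * delta2.
Proof.
  intros Hd2 Hal Hphi v Hv. specialize (Hphi v (proj1 Hv)).
  assert (Rpower v alpha <= 1).
  { replace 1 with (Rpower 1 alpha) by (unfold Rpower; rewrite ln_1, Rmult_0_r; apply exp_0).
    apply Rle_Rpower_l; lra. }
  rewrite Ropp_0, Rpower_O in Hphi by lra. nra.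
Qed.

(* If v g'(v) is increasing and g is bounded above near 0, then g' >= 0:
   otherwise g'(v) < -c / v near 0 and g would grow like -c ln v. *)
Lemma deriv_nonneg_of_bounded_near0 (g g1 : R -> R) (B : R) :
  (forall v, 0 < v -> derivable_pt_lim g v (g1 v)) ->
  (forall v w, 0 < v -> v < w -> v * g1 v < w * g1 w) ->
  (forall v, 0 < v <= 1 -> g v <= B) ->
  forall v, 0 < v -> 0 <= g1 v.
Proof.
  intros Hd Hmono Hbd x0 Hx0. destruct (Rle_or_lt 0 (g1 x0)) as [H|Hneg]; [exact H|exfalso].
  set (c := - (x0 * g1 x0)). assert (Hc : 0 < c) by (unfold c; nra).
  set (x1 := Rmin x0 1).
  assert (Hx1 : 0 < x1 <= 1 /\ x1 <= x0).
  { unfold x1. split; [split; [apply Rmin_pos | apply Rmin_r] | apply Rmin_l]; lra. }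
  set (K := Rmax (- ln x1 + 1) ((B - g x1 - c * ln x1) / c + 1)).
  assert (HK : - ln x1 + 1 <= K /\ (B - g x1 - c * ln x1) / c + 1 <= K)
    by (split; [apply Rmax_l | apply Rmax_r]).
  set (x := exp (- K)).
  assert (Hx : 0 < x < x1).
  { split; [apply exp_pos|]. unfold x. rewrite <- (exp_ln x1) by lra.
    apply exp_increasing. lra. }
  assert (Hlog : g x1 + c * ln x1 <= g x + c * ln x).
  { apply (nonincreasing_of_deriv (fun y => g y + c * ln y) (fun y => g1 y + c * / y));
      [lra| |].
    - intros y Hy. apply derivable_pt_lim_plus; [apply Hd; lra|].
      apply (derivable_pt_lim_scal ln c y), derivable_pt_lim_ln. lra.
    - intros y Hy. assert (y * g1 y < x0 * g1 x0) by (apply Hmono; lra).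
      replace (g1 y + c * / y) with ((y * g1 y + c) / y) by (field; lra).
      left. apply Rdiv_neg_pos; unfold c in *; lra. }
  unfold x in Hlog. rewrite ln_exp in Hlog.
  assert (g (exp (- K)) <= B) by (apply Hbd; fold x; lra).
  assert (B - g x1 - c * ln x1 + c <= c * K).
  { destruct HK as [_ HK]. apply (Rmult_le_compat_l c) in HK; [|lra].
    replace (c * ((B - g x1 - c * ln x1) / c + 1)) with (B - g x1 - c * ln x1 + c)
      in HK by (field; lra). exact HK. }
  lra.
Qed.

(* (A2) together with the mean value theorem produces a zero of h'. *)
Lemma deriv_has_zero (h h1 h2 : R -> R) :
  (forall v, 0 < v -> derivable_pt_lim h v (h1 v)) ->
  (forall v, 0 < v -> derivable_pt_lim h1 v (h2 v)) ->
  right_lim_infty h 0 -> lim_infty_infty (fun v => h v / v) ->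
  exists w, 0 < w /\ h1 w = 0.
Proof.
  intros Hd Hd1 Hh0 Hhinf.
  assert (Hneg : exists a, 0 < a < 1 /\ h1 a < 0).
  { destruct (near0_point _ (near0_and _ _ (right_lim_infty_near0 h (h 1) Hh0)
      (near0_lt 1 Rlt_0_1))) as [x [Hx [Hhx Hx1]]].
    destruct (MVT_cor2 h h1 x 1 Hx1 ltac:(intros c Hc; apply Hd; lra)) as [a [Ha Hxa]].
    exists a. split; [lra | nra]. }
  assert (Hpos : exists b, 1 < b /\ 0 < h1 b).
  { destruct (Hhinf (Rabs (h 1))) as [X HX].
    set (x := Rmax X 1 + 1).
    assert (HxX : X < x /\ 1 < x) by (unfold x; pose proof (Rmax_l X 1); pose proof (Rmax_r X 1); lra).
    specialize (HX x (proj1 HxX)). simpl in HX.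
    assert (Hhx : h 1 < h x).
    { apply (Rmult_lt_compat_r x) in HX; [|lra].
      replace (h x / x * x) with (h x) in HX by (field; lra).
      pose proof (Rle_abs (h 1)). pose proof (Rabs_pos (h 1)). nra. }
    destruct (MVT_cor2 h h1 1 x (proj2 HxX) ltac:(intros c Hc; apply Hd; lra)) as [b [Hb Hxb]].
    exists b. split; [lra | nra]. }
  destruct Hneg as [a [Ha Hha]]. destruct Hpos as [b [Hb Hhb]].
  destruct (Ranalysis5.IVT_interv h1 a b) as [z [Hz Hhz]]; [|lra|exact Hha|exact Hhb|].
  - intros c Hc. apply (derivable_continuity_pt _ _ (h2 c)), Hd1. lra.
  - exists z. split; [lra | exact Hhz].
Qed.

(** * The cumulative positive curvature P(x) = int_0^x s kappa_+(s) ds *)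

Section CumulativeCurvature.
Import Coquelicot.Coquelicot.

Variables (kappa : R -> R) (M : R).
Hypotheses (Hk : forall x, 0 < x -> continuity_pt kappa x)
  (Hk0 : right_lim kappa 0 (kappa 0)) (HM : 0 < M)
  (Hmu : forall pr : Riemann_integrable (fun s => s * Rmax (kappa s) 0) 0 M,
     RiemannInt pr <= 1).

(* s kappa_+(s) on [0, oo), extended continuously to the whole line. *)
Let density (s : R) : R := s * Rmax (kappa (Rmax s 0)) 0.

Lemma density_continuous (x : R) : continuity_pt density x.
Proof.
  apply (continuity_pt_mult (fun s => s) (fun s => Rmax (kappa (Rmax s 0)) 0)).
  - apply (derivable_continuity_pt _ _ 1), derivable_pt_lim_id.
  - now apply continuity_pt_pos_part, continuity_pt_clamp0.
Qed.

Lemma density_integrable (a b : R) : ex_RInt density a b.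
Proof.
  apply (@ex_RInt_continuous R_CompleteNormedModule). intros z _.
  apply continuity_pt_filterlim, density_continuous.
Qed.

Lemma density_on_nonneg (s : R) : 0 <= s -> density s = s * Rmax (kappa s) 0.
Proof. intros Hs. unfold density. now rewrite (Rmax_left s 0). Qed.

Lemma curvature_primitive :
  exists P : R -> R,
    (forall x, 0 < x < M -> derivable_pt_lim P x (x * Rmax (kappa x) 0)) /\
    (forall x, 0 < x <= M -> 0 <= P x <= 1).
Proof.
  assert (Hge : forall x, 0 <= x -> 0 <= density x).
  { intros x Hx. unfold density. apply Rmult_le_pos; [exact Hx | apply Rmax_r]. }
  assert (Hagree : forall y, Rmin 0 M <= y <= Rmax 0 M -> density y = y * Rmax (kappa y) 0).
  { intros y Hy. rewrite Rmin_left in Hy by lra. apply density_on_nonneg. lra. }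
  assert (Htotal : RInt density 0 M <= 1).
  { assert (pr : Riemann_integrable (fun s => s * Rmax (kappa s) 0) 0 M).
    { apply (Riemann_integrable_ext density); [exact Hagree|].
      apply continuity_implies_RiemannInt; [lra | intros; apply density_continuous]. }
    specialize (Hmu pr). rewrite <- RInt_Reals in Hmu.
    rewrite (RInt_ext density (fun s => s * Rmax (kappa s) 0)); [exact Hmu|].
    intros y Hy. apply Hagree. split; apply Rlt_le; apply Hy. }
  exists (fun x => RInt density 0 x). split.
  - intros x Hx. apply is_derive_Reals. rewrite <- density_on_nonneg by lra.
    apply (is_derive_RInt density) with (a := 0);
      [| apply continuity_pt_filterlim, density_continuous].
    apply filter_forall. intros b.
    apply (@RInt_correct R_CompleteNormedModule), density_integrable.
  - intros x Hx.
    assert (H0 : 0 <= RInt density 0 x).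
    { apply RInt_ge_0; [lra | apply density_integrable | intros; apply Hge; lra]. }
    assert (H1 : 0 <= RInt density x M).
    { apply RInt_ge_0; [lra | apply density_integrable | intros; apply Hge; lra]. }
    assert (HC : RInt density 0 x + RInt density x M = RInt density 0 M)
      by (apply (RInt_Chasles density 0 x M); apply density_integrable).
    lra.
Qed.

End CumulativeCurvature.

(** * A comparison principle and the positivity of f *)

Lemma lub_ge_of_continuous (G : R -> R) (S : R -> Prop) (c x1 : R) :
  is_lub S x1 -> (forall t, S t -> c <= G t) -> continuity_pt G x1 -> c <= G x1.
Proof.
  intros [Hub Hlub] HS Hc. destruct (Rle_or_lt c (G x1)) as [H|H]; [exact H|exfalso].
  destruct (proj1 (continuity_pt_eps G x1) Hc (c - G x1)) as [d [Hd Hy]]; [lra|].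
  assert (x1 <= x1 - d / 2); [|lra].
  apply Hlub. intros t Ht. destruct (Rle_or_lt t (x1 - d / 2)) as [Hle|Hgt]; [exact Hle|exfalso].
  assert (t <= x1) by (apply Hub, Ht).
  specialize (Hy t ltac:(rewrite Rabs_left1; lra)). apply Rabs_def2 in Hy.
  specialize (HS t Ht). lra.
Qed.

Lemma first_nonpositive (g : R -> R) (x2 : R) :
  0 < x2 -> g x2 <= 0 -> (forall x, 0 < x <= x2 -> continuity_pt g x) ->
  near0 (fun t => 0 < g t) ->
  exists z, 0 < z <= x2 /\ g z <= 0 /\ forall t, 0 < t < z -> 0 < g t.
Proof.
  intros Hx2 Hgx2 Hc [d [Hd Hsmall]].
  set (S := fun y => 0 < y <= x2 /\ forall t, 0 < t <= y -> 0 < g t).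
  set (y0 := Rmin (d / 2) x2).
  assert (Hy0 : 0 < y0 <= x2 /\ y0 < d).
  { unfold y0. pose proof (Rmin_l (d / 2) x2). pose proof (Rmin_r (d / 2) x2).
    assert (0 < Rmin (d / 2) x2) by (apply Rmin_pos; lra). lra. }
  assert (HSy0 : S y0) by (split; [lra | intros t Ht; apply Hsmall; lra]).
  destruct (completeness S) as [z [Hub Hlub]];
    [exists x2; intros y Hy; apply Hy | exists y0; exact HSy0|].
  assert (Hz : y0 <= z <= x2) by (split; [apply Hub, HSy0 | apply Hlub; intros y Hy; apply Hy]).
  assert (Hpos : forall t, 0 < t < z -> 0 < g t).
  { intros t Ht. destruct (Rlt_or_le 0 (g t)) as [H|Hn]; [exact H|exfalso].
    assert (z <= t); [|lra].
    apply Hlub. intros y [Hy Hyt]. destruct (Rle_or_lt y t) as [Hle|Hlt]; [exact Hle|].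
    specialize (Hyt t ltac:(lra)). lra. }
  exists z. split; [lra|]. split; [|exact Hpos].
  destruct (Rle_or_lt (g z) 0) as [H|Hgz]; [exact H|exfalso].
  destruct (Req_dec z x2) as [->|Hne]; [lra|].
  destruct (proj1 (continuity_pt_eps g z) (Hc z ltac:(lra)) (g z) Hgz) as [d' [Hd' Hy]].
  set (z' := Rmin (z + d' / 2) x2).
  assert (Hz' : z < z' <= x2 /\ z' <= z + d' / 2).
  { unfold z'. pose proof (Rmin_l (z + d' / 2) x2). pose proof (Rmin_r (z + d' / 2) x2).
    unfold Rmin; destruct Rle_dec; lra. }
  assert (z' <= z); [|lra].
  apply Hub. split; [lra|]. intros t Ht. destruct (Rlt_or_le t z); [apply Hpos; lra|].
  specialize (Hy t ltac:(rewrite Rabs_right; lra)). apply Rabs_def2 in Hy. lra.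
Qed.

(* Barrier principle: if G cannot decrease where it is negative and
   liminf_{t -> 0+} G >= 0, then G >= 0.  Otherwise let x1 be the last point
   before x0 with G >= G(x0)/2; on (x1, x0) G is negative hence
   nondecreasing, so G(x1) <= G(x0) < G(x0)/2, a contradiction. *)
Lemma nonneg_barrier (G Gd : R -> R) (x0 : R) :
  0 < x0 ->
  (forall c, 0 < c <= x0 -> derivable_pt_lim G c (Gd c)) ->
  (forall c, 0 < c < x0 -> G c < 0 -> 0 <= Gd c) ->
  (forall e, 0 < e -> exists t, 0 < t < x0 /\ - e < G t) ->
  0 <= G x0.
Proof.
  intros Hx0 HGd Hsign Hliminf.
  destruct (Rle_or_lt 0 (G x0)) as [H|Hneg]; [exact H|exfalso].
  set (c := G x0 / 2).
  set (S := fun t => 0 < t < x0 /\ c <= G t).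
  destruct (Hliminf (- c)) as [t1 [Ht1 HGt1]]; [unfold c; lra|].
  destruct (completeness S) as [x1 Hx1];
    [exists x0; intros t Ht; apply Rlt_le, Ht | exists t1; split; [exact Ht1 | lra]|].
  destruct Hx1 as [Hub Hlub].
  assert (Ht1x1 : t1 <= x1) by (apply Hub; split; [exact Ht1 | lra]).
  assert (Hx1x0 : x1 <= x0) by (apply Hlub; intros t Ht; apply Rlt_le, Ht).
  assert (HGx1 : c <= G x1).
  { apply (lub_ge_of_continuous G S c x1); [split; assumption | intros t Ht; apply Ht|].
    apply (derivable_continuity_pt _ _ (Gd x1)), HGd. lra. }
  assert (Hlt : x1 < x0) by (destruct (Req_dec x1 x0) as [->|]; unfold c in *; lra).
  assert (G x1 <= G x0).
  { apply (nondecreasing_of_deriv G Gd x1 x0 Hlt); [intros y Hy; apply HGd; lra|].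
    intros y Hy. apply Hsign; [lra|].
    destruct (Rle_or_lt c (G y)) as [Hc|Hc]; [|unfold c in *; lra].
    assert (y <= x1) by (apply Hub; split; [lra | exact Hc]). lra. }
  unfold c in *. lra.
Qed.

(* f > 0 on (0, M] when P(M) = int_0^M s kappa_+(s) ds <= 1: the quantity
   G = f' - (1 - P) f / x satisfies the barrier principle while f > 0, so
   f' >= (1 - P) f / x >= 0 and f cannot reach 0. *)
Section SturmComparison.
Variables (kappa f f1 P : R -> R) (M : R).
Hypotheses (Hf_d : forall x, 0 < x -> derivable_pt_lim f x (f1 x))
  (Hf1_d : forall x, 0 < x -> derivable_pt_lim f1 x (- kappa x * f x))
  (Hf_0 : f 0 = 0) (Hf1_0c : right_lim f1 0 1) (Hf_r0 : right_deriv f 0 1)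
  (HPd : forall x, 0 < x < M -> derivable_pt_lim P x (x * Rmax (kappa x) 0))
  (HPb : forall x, 0 < x <= M -> 0 <= P x <= 1).

Lemma f_over_x_near0 (eps : R) : 0 < eps -> near0 (fun x => Rabs (f x / x - 1) < eps).
Proof.
  intros Heps. destruct (Hf_r0 eps Heps) as [d [Hd H]]. exists d. split; [exact Hd|].
  intros x Hx. specialize (H x ltac:(lra)). now rewrite Hf_0, !Rminus_0_r in H.
Qed.

Let G (x : R) : R := f1 x - (1 - P x) * (f x / x).
Let Gd (x : R) : R :=
  (Rmax (kappa x) 0 - kappa x) * f x - (1 - P x) * ((x * f1 x - f x) / (x * x)).

Lemma G_deriv (x : R) : 0 < x < M -> derivable_pt_lim G x (Gd x).
Proof.
  intros Hx.
  replace (Gd x) with (- kappa x * f x - ((0 - x * Rmax (kappa x) 0) * (f x / x)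
      + (1 - P x) * ((f1 x * x - 1 * f x) / Rsqr x))) by (unfold Gd, Rsqr; field; lra).
  apply (derivable_pt_lim_minus f1 (fun x => (1 - P x) * (f x / x))); [apply Hf1_d; lra|].
  apply (derivable_pt_lim_mult (fun x => 1 - P x) (fun x => f x / x)).
  - apply (derivable_pt_lim_minus (fct_cte 1) P); [apply derivable_pt_lim_const | apply HPd, Hx].
  - apply (derivable_pt_lim_div f (fun x => x)); [apply Hf_d; lra | apply derivable_pt_lim_id | lra].
Qed.

(* Where f > 0 and G < 0 we have x f' - f < 0, and then G' >= 0. *)
Lemma Gd_nonneg (x : R) : 0 < x < M -> 0 < f x -> G x < 0 -> 0 <= Gd x.
Proof.
  intros Hx Hf HG. unfold G, Gd in *. destruct (HPb x ltac:(lra)) as [HP0 HP1].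
  assert (Hkappa : 0 <= (Rmax (kappa x) 0 - kappa x) * f x)
    by (pose proof (Rmax_l (kappa x) 0); nra).
  assert (Hslope : x * f1 x - f x < 0).
  { assert (x * f1 x < (1 - P x) * f x).
    { replace ((1 - P x) * f x) with (x * ((1 - P x) * (f x / x))) by (field; lra).
      apply Rmult_lt_compat_l; lra. }
    nra. }
  assert ((x * f1 x - f x) / (x * x) < 0) by (apply Rdiv_neg_pos; nra).
  nra.
Qed.

Lemma G_nonneg (z : R) : 0 < z <= M -> (forall t, 0 < t < z -> 0 < f t) ->
  forall x0, 0 < x0 < z -> 0 <= G x0.
Proof.
  intros Hz Hpos x0 Hx0. apply (nonneg_barrier G Gd x0); [lra | | |].
  - intros c Hc. apply G_deriv. lra.
  - intros c Hc HG. apply Gd_nonneg; [lra | apply Hpos; lra | exact HG].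
  - intros e He.
    destruct (near0_point _ (near0_and _ _ (near0_and _ _
      (right_lim_near0 f1 1 (e / 2) Hf1_0c ltac:(lra)) (f_over_x_near0 (e / 2) ltac:(lra)))
      (near0_lt x0 ltac:(lra)))) as [t [Ht [[H1 H2] Htx0]]].
    exists t. split; [lra|]. apply Rabs_def2 in H1. apply Rabs_def2 in H2.
    destruct (HPb t ltac:(lra)).
    assert (0 < f t / t) by (apply Rdiv_lt_0_compat; [apply Hpos|]; lra).
    unfold G. nra.
Qed.

Lemma f_positive (x : R) : 0 < x <= M -> 0 < f x.
Proof.
  intros Hx. destruct (Rlt_or_le 0 (f x)) as [H|Hfx]; [exact H|exfalso].
  assert (Hsmall : near0 (fun t => 0 < f t)).
  { apply (near0_impl (fun t => Rabs (f t / t - 1) < 1 / 2)); [|apply f_over_x_near0; lra].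
    intros t Ht H. apply Rabs_def2 in H.
    replace (f t) with (f t / t * t) by (field; lra). nra. }
  destruct (first_nonpositive f x) as [z [Hz [Hfz Hpos]]]; [lra | exact Hfx | | exact Hsmall|].
  { intros y Hy. apply (derivable_continuity_pt _ _ (f1 y)), Hf_d. lra. }
  assert (f (z / 2) <= f z).
  { apply (nondecreasing_of_deriv f f1); [lra | intros c Hc; apply Hf_d; lra|].
    intros c Hc. pose proof (G_nonneg z ltac:(lra) Hpos c ltac:(lra)) as HG. unfold G in HG.
    destruct (HPb c ltac:(lra)).
    assert (0 < f c / c) by (apply Rdiv_lt_0_compat; [apply Hpos|]; lra). nra. }
  pose proof (Hpos (z / 2) ltac:(lra)). lra.
Qed.

End SturmComparison.

Lemma cavity_radius_le (r r1 : R -> R) (r0 : R) :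
  (forall p, 0 < p < 1 -> derivable_pt_lim r p (r1 p)) ->
  (forall p, 0 < p < 1 -> 0 < r1 p) ->
  left_deriv r 1 (r1 1) -> right_lim r 0 r0 -> r0 <= r 1.
Proof.
  intros Hd Hpos Hd1 Hr0.
  assert (Hmono : forall x y, 0 < x -> x < y -> y < 1 -> r x <= r y).
  { intros x y Hx Hxy Hy. left.
    apply (increasing_of_deriv r r1); [exact Hxy | intros c Hc; apply Hd; lra |].
    intros c Hc. apply Hpos. lra. }
  pose proof (right_lim_le_of_nondecreasing r 0 1 r0 Hmono Hr0 (1 / 2) ltac:(lra)).
  pose proof (le_left_lim_of_nondecreasing r 0 1 (r 1) Hmono
    (left_lim_of_left_deriv r 1 (r1 1) Hd1) (1 / 2) ltac:(lra)).
  lra.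
Qed.

(* With A >= 1, phi' >= 0 and T = A (phi' + h' A), the value y = h' satisfies
   -|T| - phi'/A <= y <= |T|, because y A^2 = T - A phi'. *)
Lemma stress_bounds (A p y : R) : 1 <= A -> 0 <= p ->
  y <= Rabs (A * (p + y * A)) /\ - Rabs (A * (p + y * A)) - p / A <= y.
Proof.
  intros HA Hp. set (T := A * (p + y * A)).
  pose proof (Rle_abs T). pose proof (Rle_abs (- T)). rewrite Rabs_Ropp in *.
  assert (HT : y * (A * A) = T - A * p) by (unfold T; ring).
  assert (HA2 : 1 <= A * A) by nra.
  assert (HyT : y * (A * A) <= Rabs T) by (assert (0 <= A * p) by nra; lra).
  split; [destruct (Rle_or_lt y 0); [pose proof (Rabs_pos T); lra | nra]|].
  assert (- Rabs T * (A * A) <= - Rabs T) by (pose proof (Rabs_pos T); nra).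
  apply (Rmult_le_reg_r (A * A)); [nra|].
  replace ((- Rabs T - p / A) * (A * A)) with (- Rabs T * (A * A) - p * A) by (field; lra).
  lra.
Qed.

(* If A -> +oo and the stress T = A (phi'(u) + h'(u A) A)
   vanishes, then u A tends to the zero w0 of the increasing function h':
   the upper bound h'(uA) <= |T| gives uA < w0 + e, hence u <= 1 and
   phi'(u) <= phi'(1); the lower bound then gives uA > w0 - e. *)
Lemma limit_of_vanishing_stress (phi1 h1 A u : R -> R) (w0 : R) :
  (forall v, 0 < v -> 0 <= phi1 v) ->
  (forall x y, 0 < x -> x <= y -> phi1 x <= phi1 y) ->
  (forall x y, 0 < x -> x < y -> h1 x < h1 y) ->
  0 < w0 -> h1 w0 = 0 ->
  right_lim_infty A 0 -> near0 (fun p => 0 < u p) ->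
  right_lim (fun p => A p * (phi1 (u p) + h1 (u p * A p) * A p)) 0 0 ->
  right_lim (fun p => u p * A p) 0 w0.
Proof.
  intros Hphi1 Hphi1m Hh1m Hw0 Hh1w0 HA Hu HT.
  apply near0_right_lim. intros eps Heps.
  set (e := Rmin eps (w0 / 2)).
  assert (He : 0 < e <= eps /\ e <= w0 / 2)
    by (unfold e; split; [split; [apply Rmin_pos | apply Rmin_l] | apply Rmin_r]; lra).
  set (a := h1 (w0 - e)). set (b := h1 (w0 + e)).
  assert (Ha : a < 0) by (unfold a; rewrite <- Hh1w0; apply Hh1m; lra).
  assert (Hb : 0 < b) by (unfold b; rewrite <- Hh1w0; apply Hh1m; lra).
  set (eta := Rmin (- a) b / 2).
  assert (Heta : 0 < eta /\ eta <= - a / 2 /\ eta <= b / 2).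
  { unfold eta. pose proof (Rmin_l (- a) b). pose proof (Rmin_r (- a) b).
    assert (0 < Rmin (- a) b) by (apply Rmin_pos; lra). lra. }
  set (c1 := phi1 1). assert (Hc1 : 0 <= c1) by (apply Hphi1; lra).
  set (K := Rmax 1 (Rmax (2 * w0) (2 * c1 / eta + 1))).
  assert (HK : 1 <= K /\ 2 * w0 <= K /\ 2 * c1 / eta + 1 <= K).
  { unfold K. pose proof (Rmax_l 1 (Rmax (2 * w0) (2 * c1 / eta + 1))).
    pose proof (Rmax_r 1 (Rmax (2 * w0) (2 * c1 / eta + 1))).
    pose proof (Rmax_l (2 * w0) (2 * c1 / eta + 1)).
    pose proof (Rmax_r (2 * w0) (2 * c1 / eta + 1)). lra. }
  eapply near0_impl; [| apply near0_and; [apply near0_and|]];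
    [| exact (right_lim_infty_near0 A K HA)
     | exact (right_lim_near0 _ 0 (eta / 2) HT ltac:(lra)) | exact Hu].
  intros p _ [[HAp HTp] Hup]. rewrite Rminus_0_r in HTp.
  set (w := u p * A p) in *.
  assert (Hw : 0 < w) by (unfold w; nra).
  destruct (stress_bounds (A p) (phi1 (u p)) (h1 w) ltac:(lra) (Hphi1 _ Hup))
    as [Hupper Hlower].
  assert (Hwu : w < w0 + e) by (apply (increasing_reflect_lt h1); [exact Hh1m | lra | lra |]; fold b; lra).
  assert (Hu1 : u p <= 1) by (unfold w in Hwu; nra).
  assert (Hph : phi1 (u p) / A p <= c1 / A p).
  { unfold Rdiv. apply Rmult_le_compat_r; [left; apply Rinv_0_lt_compat; lra |].
    now apply Hphi1m. }
  assert (Hc1A : c1 / A p < eta / 2).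
  { apply (Rmult_lt_reg_r (A p)); [lra|]. replace (c1 / A p * A p) with c1 by (field; lra).
    assert (2 * c1 / eta * eta = 2 * c1) by (field; lra). nra. }
  assert (Hwl : w0 - e < w)
    by (apply (increasing_reflect_lt h1); [exact Hh1m | lra | lra |]; fold a; lra).
  apply Rabs_def1; lra.
Qed.

Theorem proposition4p3
  (n : nat) (Hn : (2 <= n)%nat)
  (* kappa continuous on [0, oo) *)
  (kappa : R -> R)
  (Hkappa_c : forall x, 0 < x -> continuity_pt kappa x)
  (Hkappa_0 : right_lim kappa 0 (kappa 0))
  (* f'' + kappa f = 0, f(0) = 0, f'(0) = 1 ; f1 = f' *)
  (f f1 : R -> R)
  (Hf_d : forall x, 0 < x -> derivable_pt_lim f x (f1 x))
  (Hf1_d : forall x, 0 < x -> derivable_pt_lim f1 x (- kappa x * f x))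
  (Hf_0 : f 0 = 0) (Hf_0c : right_lim f 0 0)
  (Hf1_0 : f1 0 = 1) (Hf1_0c : right_lim f1 0 1)
  (Hf_r0 : right_deriv f 0 1)
  (* stored energy: phi with derivatives phi1, phi2; h with h1, h2 *)
  (phi phi1 phi2 h h1 h2 : R -> R)
  (* (A1) *)
  (Hh_d : forall v, 0 < v -> derivable_pt_lim h v (h1 v))
  (Hh1_d : forall v, 0 < v -> derivable_pt_lim h1 v (h2 v))
  (Hh2_c : forall v, 0 < v -> continuity_pt h2 v)
  (Hh_sc : strictly_convex_pos h)
  (* (A2) *)
  (Hh_0 : right_lim_infty h 0)
  (Hh_inf : lim_infty_infty (fun v => h v / v))
  (* (A4) *)
  (Hphi_pos : forall v, 0 < v -> 0 < phi v)
  (Hphi_d : forall v, 0 < v -> derivable_pt_lim phi v (phi1 v))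
  (Hphi1_d : forall v, 0 < v -> derivable_pt_lim phi1 v (phi2 v))
  (Hphi2_c : forall v, 0 < v -> continuity_pt phi2 v)
  (Hphi_cvx : convex_pos phi)
  (* (A5) *)
  (Hphi_A5 : forall v w, 0 < v -> v < w -> v * phi1 v < w * phi1 w)
  (* (A6) *)
  (t0 : R) (Ht0 : 0 <= t0) (Ht0_phi : right_lim phi1 t0 0)
  (q1 q1d q0 q0d : R -> R)
  (Hq1_sup : forall s, 1 <= s ->
     is_lub (fun y => exists v, t0 < v /\ y = phi1 v / phi1 (s * v)) (q1 s))
  (Hq0_inf : forall s, 0 < s <= 1 ->
     is_glb (fun y => exists v, t0 / s < v /\ y = phi1 v / phi1 (s * v)) (q0 s))
  (Hq1_d : forall s, 1 < s -> derivable_pt_lim q1 s (q1d s))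
  (Hq1_d1 : right_deriv q1 1 (q1d 1))
  (Hq1d_c : forall s, 1 < s -> continuity_pt q1d s)
  (Hq1d_c1 : right_lim q1d 1 (q1d 1))
  (Hq1d_neg : forall s, 1 <= s -> q1d s < 0)
  (Hq1_lim : lim_infty q1 0)
  (Hq0_d : forall s, 0 < s < 1 -> derivable_pt_lim q0 s (q0d s))
  (Hq0_d1 : left_deriv q0 1 (q0d 1))
  (Hq0d_c : forall s, 0 < s < 1 -> continuity_pt q0d s)
  (Hq0d_c1 : left_lim q0d 1 (q0d 1))
  (Hq0d_neg : forall s, 0 < s <= 1 -> q0d s < 0)
  (Hq0_lim : right_lim_infty q0 0)
  (* (A7) *)
  (HA7 : exists delta0 delta1, 0 < delta0 /\ 0 < delta1 /\
     forall v s, 0 < v -> 0 < s -> Rabs (s - 1) < delta0 ->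
       Rabs (phi1 (s * v)) <= delta1 * phi v / v)
  (* (A8) with beta = 0 *)
  (HA8 : exists delta2 alpha, 0 < delta2 /\ 0 < alpha < INR n /\
     forall v, 0 < v -> phi v <= delta2 * (1 + Rpower v alpha + Rpower v (- 0)))
  (* lambda *)
  (lambda : R) (Hlambda : 0 < lambda)
  (Hmu : forall pr : Riemann_integrable (fun s => s * Rmax (kappa s) 0) 0 (Rmax lambda 1),
     RiemannInt pr <= 1)
  (* the equilibrium solution r with r' = r1, r'' = r2 *)
  (r r1 r2 : R -> R)
  (Hr_d : forall p, 0 < p < 1 -> derivable_pt_lim r p (r1 p))
  (Hr_d1 : left_deriv r 1 (r1 1))
  (Hr1_c : forall p, 0 < p < 1 -> continuity_pt r1 p)
  (Hr1_c1 : left_lim r1 1 (r1 1))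
  (Hr1_d : forall p, 0 < p < 1 -> derivable_pt_lim r1 p (r2 p))
  (Hr1_pos : forall p, 0 < p <= 1 -> 0 < r1 p)
  (r0 : R) (Hr0 : right_lim r 0 r0) (Hr0_nn : 0 <= r0)
  (Hr_1 : r 1 = lambda)
  (Heq : forall p, 0 < p < 1 ->
     let tau := f (r p) / f p in
     f p * (phi2 (r1 p) + h2 (r1 p * tau ^ (n - 1)) * tau ^ (2 * (n - 1))) * r2 p
     = INR (n - 1) * (f1 (r p) * phi1 tau - f1 p * phi1 (r1 p))
       - INR (n - 1) * (f1 (r p) * r1 p - f1 p * tau)
         * h2 (r1 p * tau ^ (n - 1)) * r1 p * tau ^ (2 * n - 3))
  (* cavitating *)
  (Hcav_r0 : 0 < r0)
  (Hcav_T : right_lim (fun p =>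
     let tau := f (r p) / f p in
     tau ^ (n - 1) * (phi1 (r1 p) + h1 (r1 p * tau ^ (n - 1)) * tau ^ (n - 1))) 0 0) :
  (exists w, 0 < w /\ h1 w = 0) /\
  (forall w, 0 < w -> h1 w = 0 ->
     right_lim (fun p => r1 p * (f (r p) / f p) ^ (n - 1)) 0 w).
Proof.
  set (M := Rmax lambda 1).
  assert (HM : lambda <= M /\ 1 <= M) by (split; [apply Rmax_l | apply Rmax_r]).
  destruct (curvature_primitive kappa M Hkappa_c Hkappa_0 ltac:(lra) Hmu) as [P [HPd HPb]].
  pose proof (f_positive kappa f f1 P M Hf_d Hf1_d Hf_0 Hf1_0c Hf_r0 HPd HPb) as Hfpos.
  pose proof (cavity_radius_le r r1 r0 Hr_d ltac:(intros; apply Hr1_pos; lra) Hr_d1 Hr0)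
    as Hr0_le.
  destruct HA8 as [delta2 [alpha [Hdelta2 [Halpha Hbound]]]].
  pose proof (deriv_nonneg_of_bounded_near0 phi phi1 (3 * delta2) Hphi_d Hphi_A5
    (phi_bounded_near0 phi delta2 alpha Hdelta2 (proj1 Halpha) Hbound)) as Hphi1.
  split; [exact (deriv_has_zero h h1 h2 Hh_d Hh1_d Hh_0 Hh_inf)|].
  intros w0 Hw0 Hh1w0.
  apply (limit_of_vanishing_stress phi1 h1 (fun p => (f (r p) / f p) ^ (n - 1)) r1 w0);
    [exact Hphi1 | exact (convex_deriv_nondecreasing phi phi1 Hphi_d Hphi_cvx)
    | exact (strictly_convex_deriv_increasing h h1 Hh_d Hh_sc) | exact Hw0 | exact Hh1w0
    | | exists 1; split; [lra | intros p Hp; apply Hr1_pos; lra] | exact Hcav_T].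
  (* tau -> +oo: f(r(rho)) -> f(r0) > 0 while f(rho) -> 0+. *)
  apply right_lim_infty_pow; [lia|].
  apply (right_lim_infty_div _ _ (f r0)); [apply Hfpos; lra | | exact Hf_0c |].
  - apply right_lim_comp_continuous; [|exact Hr0].
    apply (derivable_continuity_pt _ _ (f1 r0)), Hf_d, Hcav_r0.
  - exists 1. split; [lra | intros p Hp; apply Hfpos; lra].
Qed.
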